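(* Let $q$ be a prime power. The nilpotent graph $\Gamma_{\mathfrak{N}}(\mathfrak{t}(2,\mathbb{F}_q))$ is $(q^2-q-1)$-regular.
   Context: $\mathfrak{t}(2,\mathbb{F}_q)$ is the Lie algebra of $2\times 2$ upper triangular matrices over $\mathbb{F}_q$ with bracket $[x,y]=xy-yx$. $\langle a,b\rangle$ denotes the Lie subalgebra generated by $a,b$, and $\mathrm{nil}(L)=\{x\in L\mid \langle h,x\rangle \text{ is nilpotent for all } h\in L\}$. For a finite-dimensional non-nilpotent Lie algebra $L$, the nilpotent graph $\Gamma_{\mathfrak{N}}(L)$ is the simple undirected graph with vertex set $L\setminus\mathrm{nil}(L)$ in which distinct vertices $x,y$ are adjacent iff $\langle x,y\rangle$ is nilpotent. A graph is $k$-regular if every vertex has degree $k$. *)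

From HB Require Import structures.
From mathcomp Require Import all_boot all_order all_algebra all_field.
From mathcomp Require Import boolp.
Set Implicit Arguments. Unset Strict Implicit. Unset Printing Implicit Defensive.
Import GRing.Theory.
Local Open Scope ring_scope.

Section Lie.
Variable F : finFieldType.
Local Notation M := 'M[F]_2.

Definition lbr (x y : M) : M := x *m y - y *m x.

Definition subspaceb (S : {set M}) : bool :=
  [&& (0 : M) \in S,
      [forall x in S, forall y in S, x + y \in S] &
      [forall c : F, forall x in S, c *: x \in S]].

Definition lspan (A : {set M}) : {set M} :=
  \bigcap_(S : {set M} | subspaceb S && (A \subset S)) S.

Definition lie_subalgb (S : {set M}) : bool :=
  subspaceb S && [forall x in S, forall y in S, lbr x y \in S].

Definition lie_gen (a b : M) : {set M} :=
  \bigcap_(S : {set M} | [&& lie_subalgb S, a \in S & b \in S]) S.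

Fixpoint lcs (S : {set M}) (k : nat) : {set M} :=
  match k with
  | 0 => S
  | k'.+1 => lspan [set lbr x y | x in S, y in lcs S k']
  end.

Definition lie_nilpotent (S : {set M}) : Prop :=
  exists k, lcs S k = [set 0 : M].

Definition t2 : {set M} := [set A : M | A 1 0 == 0].

Definition nilt2 : {set M} :=
  [set x in t2 | `[< forall h, h \in t2 -> lie_nilpotent (lie_gen h x) >]].

Definition nil_graph_vertices : {set M} := t2 :\: nilt2.

Definition nil_graph_adj (x y : M) : bool :=
  [&& x \in nil_graph_vertices, y \in nil_graph_vertices, x != y &
      `[< lie_nilpotent (lie_gen x y) >]].

Definition nil_graph_deg (x : M) : nat :=
  #|[set y : M | nil_graph_adj x y]|.

Definition nil_graph_regular (k : nat) : Prop :=
  forall x, x \in nil_graph_vertices -> nil_graph_deg x = k.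
End Lie.

(** Two upper triangular matrices [x], [y] have bracket [lbr x y = c(x, y) e01],
    where [c(x, y) = (x00 - x11) y01 - (y00 - y11) x01].  If [c(x, y) = 0] then
    [span {x, y}] is an abelian subalgebra and [<x, y>] is nilpotent; otherwise
    [<x, y>] contains [e01] and an element [g] with [lbr g e01 = e01], so [e01]
    survives in every term of the lower central series.  Hence [nil(t2)] is the
    set of the [q] scalar matrices, and the neighbours of a non-scalar [x] are
    the non-scalar elements of its centralizer [{s x + t 1}] (which has [q^2]
    elements) other than [x] itself: [q^2 - q - 1] of them. *)
From HB Require Import structures.
From mathcomp Require Import all_boot all_order all_algebra all_field boolp.
From mathcomp Require Import ring.
Set Implicit Arguments. Unset Strict Implicit. Unset Printing Implicit Defensive.
Import GRing.Theory.
Local Open Scope ring_scope.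

Section LieGen.
Variable F : finFieldType.
Local Notation M := 'M[F]_2.
Implicit Types (x y z : M) (A G S : {set M}).

Lemma lie_subalg_scale S c z : lie_subalgb S -> z \in S -> c *: z \in S.
Proof. by case/andP=> /and3P[_ _ /forallP/(_ c)/forallP/(_ z)/implyP] + _; apply. Qed.

Lemma lie_subalg_lbr S u v : lie_subalgb S -> u \in S -> v \in S -> lbr u v \in S.
Proof. by case/andP=> _ /forallP/(_ u)/implyP hS /hS/forallP/(_ v)/implyP. Qed.

Lemma lie_genP x y z :
  reflect (forall S, lie_subalgb S -> x \in S -> y \in S -> z \in S)
          (z \in lie_gen x y).
Proof.
apply: (iffP bigcapP) => [h S Sx Sy Sz | h S]; first by apply: h; rewrite Sx Sy Sz.
by case/and3P; apply: h.
Qed.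

Lemma lie_gen_l x y : x \in lie_gen x y.
Proof. by apply/lie_genP. Qed.

Lemma lie_gen_r x y : y \in lie_gen x y.
Proof. by apply/lie_genP. Qed.

Lemma lie_gen_scale x y c z : z \in lie_gen x y -> c *: z \in lie_gen x y.
Proof.
by move/lie_genP=> Gz; apply/lie_genP=> S hS Sx Sy; apply: lie_subalg_scale (Gz _ _ _ _).
Qed.

Lemma lie_gen_lbr x y u v :
  u \in lie_gen x y -> v \in lie_gen x y -> lbr u v \in lie_gen x y.
Proof.
move=> /lie_genP Gu /lie_genP Gv; apply/lie_genP=> S hS Sx Sy.
exact: lie_subalg_lbr (Gu _ _ _ _) (Gv _ _ _ _).
Qed.

Lemma lie_gen_sub x y S : lie_subalgb S -> x \in S -> y \in S -> lie_gen x y \subset S.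
Proof. by move=> hS Sx Sy; apply: bigcap_inf; rewrite hS Sx Sy. Qed.

Lemma lspan_sub A S : subspaceb S -> A \subset S -> lspan A \subset S.
Proof. by move=> hS hA; apply: bigcap_inf; rewrite hS hA. Qed.

Lemma sub_lspan A : A \subset lspan A.
Proof. by apply/bigcapsP=> S /andP[]. Qed.

Lemma lspan0 A : 0 \in lspan A.
Proof. by apply/bigcapP=> S /andP[/and3P[]]. Qed.

Lemma subspace_set0 : subspaceb [set 0 : M].
Proof.
apply/and3P; split; first by rewrite inE.
  by apply/forall_inP=> _ /set1P->; apply/forall_inP=> _ /set1P->; rewrite addr0 inE.
by apply/forallP=> c; apply/forall_inP=> _ /set1P->; rewrite scaler0 inE.
Qed.

Lemma lie_nilpotent_abelian G : {in G &, forall u v, lbr u v = 0} -> lie_nilpotent G.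
Proof.
move=> abG; exists 1%N; apply/eqP; rewrite eqEsubset sub1set lspan0 andbT.
apply: lspan_sub subspace_set0 _; apply/subsetP=> _ /imset2P[u v Gu Gv ->].
by rewrite inE abG.
Qed.

Lemma lcs_fixed G g e : g \in G -> e \in G -> lbr g e = e -> forall k, e \in lcs G k.
Proof.
move=> Gg Ge gee; elim=> [|k IHk] //=.
by apply: (subsetP (sub_lspan _)); apply/imset2P; exists g e.
Qed.

Definition span2 x y : {set M} := [set p.1 *: x + p.2 *: y | p : F * F].

Lemma span2_subalg x y : lbr x y = 0 ->
  lie_subalgb (span2 x y) /\ {in span2 x y &, forall u v, lbr u v = 0}.
Proof.
move=> /eqP; rewrite subr_eq0 => /eqP xy.
have ab : {in span2 x y &, forall u v, lbr u v = 0}.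
  move=> _ _ /imsetP[[a b] _ ->] /imsetP[[c d] _ ->] /=.
  rewrite /lbr !mulmxDl !mulmxDr -!scalemxAl -!scalemxAr !scalerA xy.
  by rewrite [c * a]mulrC [d * a]mulrC [c * b]mulrC [d * b]mulrC addrACA subrr.
have comb p : p.1 *: x + p.2 *: y \in span2 x y by apply: imset_f.
have S0 : 0 \in span2 x y by have := comb (0, 0); rewrite /= !scale0r addr0.
split=> //; apply/andP; split; last first.
  by apply/forall_inP=> u Su; apply/forall_inP=> v Sv; rewrite ab.
apply/and3P; split.
- by [].
- apply/forall_inP=> _ /imsetP[[a b] _ ->]; apply/forall_inP=> _ /imsetP[[c d] _ ->] /=.
  by rewrite addrACA -!scalerDl (comb (a + c, b + d)).
- apply/forallP=> k; apply/forall_inP=> _ /imsetP[[a b] _ ->] /=.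
  by rewrite scalerDr !scalerA (comb (k * a, k * b)).
Qed.

Lemma lie_gen_nilpotent_comm x y : lbr x y = 0 -> lie_nilpotent (lie_gen x y).
Proof.
move=> /span2_subalg[subS abS]; apply: lie_nilpotent_abelian => u v Gu Gv.
have GS : lie_gen x y \subset span2 x y.
  apply: lie_gen_sub => //; apply/imsetP.
    by exists (1, 0); rewrite ?inE //= scale1r scale0r addr0.
  by exists (0, 1); rewrite ?inE //= scale1r scale0r add0r.
by apply: abS; apply: (subsetP GS).
Qed.

End LieGen.

Lemma nonscalar_scale_add_inj (F : fieldType) n (x : 'M[F]_n.+1) s t s' t' :
  ~~ is_scalar_mx x -> s *: x + t%:M = s' *: x + t'%:M -> s = s' /\ t = t'.
Proof.
move=> nsx e; suff ss : s = s'.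
  split=> //; move: e; rewrite ss => /addrI /matrixP/(_ ord0 ord0).
  by rewrite !mxE eqxx !mulr1n.
apply/eqP; apply: contraNT nsx => ss.
have e' : (s - s') *: x = (t' - t)%:M.
  by rewrite scalerBl raddfB /=; apply/eqP; rewrite subr_eq addrAC [t'%:M + _]addrC -e addrK.
apply/is_scalar_mxP; exists ((s - s')^-1 * (t' - t)).
by rewrite -scale_scalar_mx -e' scalerA mulVf ?subr_eq0 // scale1r.
Qed.

Lemma mul_eq_proportional (F : fieldType) (a b c d : F) :
  (a != 0) || (b != 0) -> a * d = c * b -> exists s, c = s * a /\ d = s * b.
Proof.
case: (eqVneq a 0) => [-> /= nzb | nza _] e.
  exists (d / b); rewrite divfK // mulr0; split=> //.
  by apply/eqP; move: e; rewrite mul0r => /eqP; rewrite eq_sym mulf_eq0 (negbTE nzb) orbF.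
exists (c / a); rewrite divfK //; split=> //.
by apply: (mulfI nza); rewrite e mulrCA mulrA divfK.
Qed.

Section UpperTriangular.
Variable F : finFieldType.
Local Notation M := 'M[F]_2.
Local Notation t2 := (t2 F).
Local Notation scalars := [set z : M | is_scalar_mx z].
Implicit Types (x y g : M).

Lemma ord2P (i : 'I_2) : i = 0 \/ i = 1.
Proof. by case: i => [[|[|//]] ?]; [left|right]; apply: val_inj. Qed.

Lemma eq_mx2 x y :
  x 0 0 = y 0 0 -> x 0 1 = y 0 1 -> x 1 0 = y 1 0 -> x 1 1 = y 1 1 -> x = y.
Proof.
by move=> e00 e01 e10 e11; apply/matrixP=> i j; case: (ord2P i) (ord2P j) => -> [] ->.
Qed.

Lemma big_ord2 (f : 'I_2 -> F) : \sum_i f i = f 0 + f 1.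
Proof. by rewrite !big_ord_recl big_ord0 addr0; congr (f _ + f _); apply: val_inj. Qed.

Definition e01 : M := delta_mx 0 1.

Definition lbr_coef x y : F := (x 0 0 - x 1 1) * y 0 1 - (y 0 0 - y 1 1) * x 0 1.

Lemma e01_neq0 : e01 != 0.
Proof. by apply/eqP=> /matrixP/(_ 0 1)/eqP; rewrite !mxE oner_eq0. Qed.

Lemma e01_t2 : e01 \in t2.
Proof. by rewrite inE mxE. Qed.

Lemma lbr_t2 x y : x \in t2 -> y \in t2 -> lbr x y = lbr_coef x y *: e01.
Proof.
rewrite !inE => /eqP x10 /eqP y10; apply: eq_mx2;
  by rewrite /lbr /lbr_coef !mxE !big_ord2 /= ?x10 ?y10; ring.
Qed.

Lemma lbr_coef_e01 g : lbr_coef g e01 = g 0 0 - g 1 1.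
Proof. by rewrite /lbr_coef !mxE /=; ring. Qed.

Lemma lie_gen_not_nilpotent x y : x \in t2 -> y \in t2 -> lbr_coef x y != 0 ->
  ~ lie_nilpotent (lie_gen x y).
Proof.
move=> t2x t2y cxy [k lcs0].
have Ge01 : e01 \in lie_gen x y.
  have := lie_gen_scale (lbr_coef x y)^-1 (lie_gen_lbr (lie_gen_l x y) (lie_gen_r x y)).
  by rewrite lbr_t2 // scalerA mulVf // scale1r.
have [g [Gg t2g dg]] : exists g, [/\ g \in lie_gen x y, g \in t2 & g 0 0 - g 1 1 != 0].
  case: (eqVneq (x 0 0 - x 1 1) 0) => dx; last by exists x; rewrite lie_gen_l.
  case: (eqVneq (y 0 0 - y 1 1) 0) => dy; last by exists y; rewrite lie_gen_r.
  by move: cxy; rewrite /lbr_coef dx dy !mul0r subrr eqxx.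
(* [g] acts on [e01] with eigenvalue [g00 - g11]; rescale it to eigenvalue 1. *)
set g1 := (g 0 0 - g 1 1)^-1 *: g.
have t2g1 : g1 \in t2 by move: t2g; rewrite !inE mxE => /eqP->; rewrite mulr0.
have g1e01 : lbr g1 e01 = e01.
  by rewrite lbr_t2 ?e01_t2 // lbr_coef_e01 !mxE -mulrBr mulVf // scale1r.
have := lcs_fixed (lie_gen_scale _ Gg) Ge01 g1e01 k.
by rewrite lcs0 inE (negbTE e01_neq0).
Qed.

Lemma lie_nilpotent_t2 x y : x \in t2 -> y \in t2 ->
  `[< lie_nilpotent (lie_gen x y) >] = (lbr_coef x y == 0).
Proof.
move=> t2x t2y; apply/asboolP/eqP => [nil_xy | cxy].
  by apply/eqP; apply: contraT => /(lie_gen_not_nilpotent t2x t2y).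
by apply: lie_gen_nilpotent_comm; rewrite lbr_t2 // cxy scale0r.
Qed.

Lemma scalar_mx_t2 (a : F) : a%:M \in t2.
Proof. by rewrite inE mxE. Qed.

Lemma t2_scalarP x : x \in t2 ->
  reflect (x 0 1 = 0 /\ x 0 0 = x 1 1) (is_scalar_mx x).
Proof.
rewrite inE => /eqP x10; apply: (iffP is_scalar_mxP) => [[a ->] | [x01 xd]].
  by rewrite !mxE.
by exists (x 0 0); apply: eq_mx2; rewrite !mxE ?x01 ?x10 //= -xd.
Qed.

Lemma nilt2E : nilt2 F = scalars.
Proof.
apply/setP=> x; rewrite [in LHS]inE [in RHS]inE; apply/andP/idP => [[t2x /asboolP nil_x] | scx].
  have t2e00 : delta_mx 0 0 \in t2 by rewrite inE mxE.
  move: (nil_x _ t2e00) (nil_x _ e01_t2) => /asboolP + /asboolP.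
  rewrite !lie_nilpotent_t2 ?e01_t2 // /lbr_coef !mxE /=.
  rewrite subr0 subrr mul1r !mul0r !mulr0 mulr1 subr0 sub0r oppr_eq0 subr_eq0.
  by move=> /eqP x01 /eqP xd; apply/t2_scalarP.
have t2x : x \in t2 by have [a ->] := is_scalar_mxP scx; apply: scalar_mx_t2.
split=> //; apply/asboolP => h t2h; apply/asboolP; rewrite lie_nilpotent_t2 //.
by have [x01 xd] := t2_scalarP t2x scx; rewrite /lbr_coef x01 xd subrr mulr0 mul0r subrr.
Qed.

Lemma card_scalar_mx : #|scalars| = #|F|.
Proof.
have -> : scalars = [set a%:M | a : F].
  by apply/setP=> x; rewrite inE; apply/is_scalar_mxP/imsetP=> [[a ->] | [a _ ->]]; exists a.
rewrite card_imset ?cardsT // => a b /matrixP/(_ 0 0).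
by rewrite !mxE !mulr1n.
Qed.

Definition t2_centralizer x : {set M} := [set y in t2 | lbr_coef x y == 0].

Lemma t2_centralizerE x : x \in t2 -> ~~ is_scalar_mx x ->
  t2_centralizer x = [set p.1 *: x + p.2%:M | p : F * F].
Proof.
move=> t2x nsx; have x10 : x 1 0 = 0 by apply/eqP; rewrite inE in t2x.
apply/setP=> y; rewrite inE; apply/andP/imsetP => [[t2y /eqP cxy] | [[s t] _ ->]]; last first.
  by rewrite inE /lbr_coef !mxE /= x10 mulr0 addr0 eqxx; split=> //; apply/eqP; ring.
have y10 : y 1 0 = 0 by apply/eqP; rewrite inE in t2y.
have nzx : (x 0 0 - x 1 1 != 0) || (x 0 1 != 0).
  by apply: contraR nsx; rewrite negb_or !negbK subr_eq0 => /andP[/eqP xd /eqP x01];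
    apply/t2_scalarP.
have [s [ys y01]] : exists s, y 0 0 - y 1 1 = s * (x 0 0 - x 1 1) /\ y 0 1 = s * x 0 1.
  by apply: mul_eq_proportional nzx _; apply/eqP; rewrite -subr_eq0 -/(lbr_coef x y) cxy.
exists (s, y 0 0 - s * x 0 0); rewrite ?inE //.
have y11 : y 1 1 = y 0 0 - s * (x 0 0 - x 1 1) by rewrite -ys opprB addrC subrK.
by apply: eq_mx2; rewrite !mxE /= ?x10 ?y10 ?y01 ?y11 ?mulr1n ?mulr0n; ring.
Qed.

Lemma card_t2_centralizer x : x \in t2 -> ~~ is_scalar_mx x ->
  #|t2_centralizer x| = (#|F| ^ 2)%N.
Proof.
move=> t2x nsx; rewrite t2_centralizerE // card_imset ?cardsT ?card_prod ?mulnn //.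
by move=> [s t] [s' t'] /= /(nonscalar_scale_add_inj nsx) [-> ->].
Qed.

Lemma t2_centralizer_id x : x \in t2 -> x \in t2_centralizer x.
Proof. by move=> t2x; rewrite inE t2x /lbr_coef; apply/eqP; ring. Qed.

Lemma scalar_mx_sub_t2_centralizer x : scalars \subset t2_centralizer x.
Proof.
apply/subsetP=> _ /[!inE] /is_scalar_mxP[a ->].
by rewrite /lbr_coef !mxE /= subrr mul0r mulr0 subrr eqxx.
Qed.

Lemma nil_graph_verticesE : nil_graph_vertices F = t2 :\: scalars.
Proof. by rewrite /nil_graph_vertices nilt2E. Qed.

Lemma nil_graph_neighbours x : x \in nil_graph_vertices F ->
  [set y | nil_graph_adj x y] = (t2_centralizer x :\: scalars) :\ x.
Proof.
rewrite nil_graph_verticesE => Vx; have [t2x _] := setDP Vx.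
apply/setP=> y; rewrite /nil_graph_adj nil_graph_verticesE Vx in_setD1 !in_setD in_set.
rewrite in_setD [y \in t2_centralizer x]inE.
case t2y: (y \in t2); rewrite ?andbF //= andbT.
by rewrite lie_nilpotent_t2 // eq_sym andbCA.
Qed.

End UpperTriangular.

Theorem corollary4p7 (F : finFieldType) :
  nil_graph_regular F (#|F| ^ 2 - #|F| - 1)%N.
Proof.
move=> x Vx; have := Vx; rewrite nil_graph_verticesE => /setDP[t2x]; rewrite inE => nsx.
rewrite /nil_graph_deg nil_graph_neighbours //.
have xC : x \in t2_centralizer x :\: [set z | is_scalar_mx z].
  by rewrite inE t2_centralizer_id // inE nsx.
set C := _ :\: _ in xC *.
have := cardsD1 x C; rewrite xC add1n => cardC.
rewrite -[LHS]succnK -cardC /C cardsD (setIidPr (scalar_mx_sub_t2_centralizer x)).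
by rewrite card_scalar_mx (card_t2_centralizer t2x nsx) subn1.
Qed.
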